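(* Let $w=w_1\cdots w_n\in S_n$ and view $w$ as the composition $(w_1,\ldots,w_n)$. Then the Newton polytope $\mathrm{Newton}(\kappa_w)$ of the key polynomial $\kappa_w(x)$ equals the Bruhat interval polytope $\mathsf{Q}_{w,w_0}$, where $w_0=n\,(n-1)\cdots 2\,1$ is the maximum of $S_n$ in the Bruhat order.
   Context: For a polynomial $f=\sum_\alpha c_\alpha x^\alpha\in\mathbb{R}[x_1,\ldots,x_n]$, $\mathrm{Newton}(f)$ is the convex hull of $\{\alpha\colon c_\alpha\neq0\}$. Let $\partial_i f=(f-s_if)/(x_i-x_{i+1})$, where $s_if$ swaps $x_i$ and $x_{i+1}$, and $\pi_i f=\partial_i(x_if)$. Key polynomials for a composition $\alpha$ of length $n$: if $\alpha$ is weakly decreasing, $\kappa_\alpha=x^\alpha$; otherwise choose $i$ with $\alpha_i<\alpha_{i+1}$, let $\alpha'$ be $\alpha$ with $\alpha_i,\alpha_{i+1}$ interchanged, and set $\kappa_\alpha=\pi_i\kappa_{\alpha'}$. For $u\le v$ in the Bruhat order on $S_n$, the Bruhat interval polytope $\mathsf{Q}_{u,v}$ is the convex hull in $\mathbb{R}^n$ of the vectors $(\sigma_1,\ldots,\sigma_n)$ for all $\sigma$ in the Bruhat interval $[u,v]$. *)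

From HB Require Import structures.
From mathcomp Require Import all_boot all_order all_algebra all_fingroup.
From mathcomp Require Import mpoly.
From Stdlib Require Import ClassicalEpsilon.
Set Implicit Arguments. Unset Strict Implicit. Unset Printing Implicit Defensive.
Import Order.TTheory GRing.Theory Num.Theory.
Local Open Scope ring_scope.

Section KeyNewton.
Variables (R : realFieldType) (n : nat).

(* successor index i+1 (only used when i.+1 < n; insubd is just a total cast) *)
Definition osucc (i : 'I_n) : 'I_n := insubd i i.+1.
Definition sti (i : 'I_n) : 'S_n := tperm i (osucc i).

(* divided difference: d_i f = (f - s_i f) / (x_i - x_{i+1}), the exact
   quotient in the polynomial ring (chosen classically; it exists and is
   unique since {mpoly R[n]} is an integral domain). *)
Definition ddiff (i : 'I_n) (f : {mpoly R[n]}) : {mpoly R[n]} :=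
  epsilon (inhabits 0)
    (fun g : {mpoly R[n]} =>
       ('X_i - 'X_(osucc i)) * g = f - msym (sti i) f).

Definition demazure (i : 'I_n) (f : {mpoly R[n]}) : {mpoly R[n]} :=
  ddiff i ('X_i * f).

Definition xpow (a : 'I_n -> nat) : {mpoly R[n]} :=
  'X_[ [multinom a i | i < n] ].

Fixpoint key_fuel (k : nat) (a : 'I_n -> nat) : {mpoly R[n]} :=
  match k with
  | 0 => xpow a
  | k'.+1 =>
    match [pick i : 'I_n | (i.+1 < n)%N && (a i < a (osucc i))%N] with
    | Some i => demazure i (key_fuel k' (fun p => a (sti i p)))
    | None => xpow a
    end
  end.

(* Each step removes exactly one pair p<q with a_p<a_q, so n^2 steps
   always suffice to reach a weakly decreasing composition. *)
Definition key (a : 'I_n -> nat) : {mpoly R[n]} := key_fuel (n ^ 2) a.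

Definition conv (S : seq 'rV[R]_n) (x : 'rV[R]_n) : Prop :=
  exists lam : 'I_(size S) -> R,
    (forall k, 0 <= lam k) /\ \sum_k lam k = 1 /\
    x = \sum_k lam k *: S`_k.

Definition mvec (m : 'X_{1..n}) : 'rV[R]_n := \row_i ((m i)%:R).

Definition Newton (f : {mpoly R[n]}) : 'rV[R]_n -> Prop :=
  conv [seq mvec m | m <- msupp f].

Definition pvec (s : 'S_n) : 'rV[R]_n := \row_i ((s i).+1%:R).

End KeyNewton.

Definition perm_comp (n : nat) (w : 'S_n) : 'I_n -> nat := fun i => (w i).+1.

(* Bruhat order: reflexive-transitive closure of u -> u t_{ij} where
   i < j are positions with u(i) < u(j) (i.e. length increases). *)
Definition bruhat_step (n : nat) : rel 'S_n :=
  fun u v => [exists i : 'I_n, exists j : 'I_n,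
               [&& (i < j)%N, (u i < u j)%N & v == (tperm i j * u)%g]].

Definition bruhat_le (n : nat) (u v : 'S_n) : bool := connect (@bruhat_step n) u v.

Definition w0 (n : nat) : 'S_n := perm (@rev_ord_inj n).

Definition bip (R : realFieldType) (n : nat) (u v : 'S_n) : 'rV[R]_n -> Prop :=
  conv [seq pvec R s | s <- enum 'S_n & bruhat_le u s && bruhat_le s v].

From HB Require Import structures.
From mathcomp Require Import all_boot all_order all_algebra all_fingroup.
From mathcomp Require Import mpoly.
From mathcomp Require Import zify.
From Stdlib Require Import ClassicalEpsilon FunctionalExtensionality.
Set Implicit Arguments. Unset Strict Implicit. Unset Printing Implicit Defensive.
Import Order.TTheory GRing.Theory Num.Theory.
Local Open Scope ring_scope.

(* Induction along the recursion kappa_g = pi_i kappa_(g s_i), valid when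
   g_i < g_(i+1), starting from kappa_(w0) = x^(n, ..., 1).  For f = kappa_g
   we maintain: every exponent of f lies in the hull of the permutation
   vectors of the upper interval [g, w0]; the coefficient of the permutation
   monomial of b is 1 if g <= b and 0 otherwise; and every exponent has sum
   of squares at most that of a permutation vector.  Now pi_i x^m is, up to
   sign, the sum of the monomials on the segment from m to s_i m.  The first
   clause survives because s_i g <= b implies both g <= b and g <= s_i b
   (lifting property of the Bruhat order).  As the sum of squares is strictly smaller inside a
   segment than at its endpoints, the coefficient of a permutation monomial
   in pi_i f only comes from itself or its s_i-image, which propagates the
   second clause.  The two inclusions then follow, since every permutation
   lies below w0. *)

Section ConvexHull.
Variables (R : realFieldType) (n : nat).
Implicit Types (S T : seq 'rV[R]_n) (x p q : 'rV[R]_n).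

Lemma conv_mem S p : p \in S -> conv S p.
Proof.
move=> pS; have iS : (index p S < size S)%N by rewrite index_mem.
exists (fun k => (val k == index p S)%:R); split; first by move=> k; case: eqP.
have pick_index (V : lmodType R) (F : nat -> V) :
    \sum_(k < size S) (val k == index p S)%:R *: F k = F (index p S).
  rewrite (bigD1 (Ordinal iS)) //= eqxx scale1r big1 ?addr0 // => k.
  by rewrite -val_eqE /= => /negbTE ->; rewrite scale0r.
split; first by rewrite -[RHS](pick_index R^o (fun=> 1)); apply: eq_bigr => k _; rewrite [RHS]mulr1.
by rewrite pick_index nth_index.
Qed.

Lemma conv_linear (f : {linear 'rV[R]_n -> 'rV[R]_n}) S T x :
  conv S x -> (forall p, p \in S -> conv T (f p)) -> conv T (f x).
Proof.
move=> [lam [lam_ge0 [lam_sum ->]]] fS.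
have /fin_all_exists[mu mu_spec] : forall k : 'I_(size S), exists mu : 'I_(size T) -> R,
    [/\ forall t, 0 <= mu t, \sum_t mu t = 1 & f S`_k = \sum_t mu t *: T`_t].
  by move=> k; have [mu [? [? ?]]] := fS _ (mem_nth 0 (ltn_ord k)); exists mu.
exists (fun t => \sum_k lam k * mu k t); split.
  by move=> t; apply: sumr_ge0 => k _; apply: mulr_ge0 => //; case: (mu_spec k).
split.
  rewrite exchange_big -lam_sum; apply: eq_bigr => k _.
  by rewrite -mulr_sumr; case: (mu_spec k) => _ -> _; rewrite mulr1.
rewrite linear_sum (eq_bigr (fun k => \sum_t (lam k * mu k t) *: T`_t)).
  by rewrite exchange_big; apply: eq_bigr => t _; rewrite scaler_suml.
move=> k _; rewrite linearZ_LR; case: (mu_spec k) => _ _ ->.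
by rewrite scaler_sumr; apply: eq_bigr => t _; rewrite scalerA.
Qed.

Lemma conv_trans S T x : conv S x -> (forall p, p \in S -> conv T p) -> conv T x.
Proof. exact: (conv_linear (f := idfun)). Qed.

Lemma conv_sub S T x : {subset S <= T} -> conv S x -> conv T x.
Proof. by move=> sST Sx; apply: conv_trans Sx _ => p /sST; apply: conv_mem. Qed.

Lemma conv_segment T p q (u v : R) x : conv T p -> conv T q ->
  0 <= u -> 0 <= v -> 0 < u + v -> (u + v) *: x = u *: p + v *: q -> conv T x.
Proof.
move=> [lam [lam_ge0 [lam_sum ->]]] [mu [mu_ge0 [mu_sum ->]]] u_ge0 v_ge0 uv_gt0 ex.
have uv_neq0 : u + v != 0 by rewrite gt_eqF.
exists (fun k => (u * lam k + v * mu k) / (u + v)); split.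
  by move=> k; apply: divr_ge0; [apply: addr_ge0; apply: mulr_ge0 | apply: ltW].
split; first by rewrite -mulr_suml big_split -!mulr_sumr lam_sum mu_sum !mulr1 divff.
rewrite -[x]scale1r -(mulVf uv_neq0) -scalerA ex !scaler_sumr -big_split scaler_sumr.
by apply: eq_bigr => k _ /=; rewrite !scalerA -scalerDl scalerA mulrC.
Qed.

End ConvexHull.

Lemma decreasing_bounded_eq (f : nat -> nat) (N : nat) :
    (forall k, (k.+1 < N)%N -> (f k.+1 < f k)%N) -> (forall k, (k < N)%N -> (f k < N)%N) ->
  forall k, (k < N)%N -> f k = (N - k.+1)%N.
Proof.
move=> f_decr f_lt k kN.
have upper j : (j < N)%N -> (f j + j <= f 0)%N.
  elim: j => [|j IH] jN; first by rewrite addn0.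
  by have := IH (ltnW jN); have := f_decr j jN; lia.
have lower d : (d < N)%N -> (d <= f (N.-1 - d))%N.
  elim: d => [|d IH] dN //.
  have := IH (ltnW dN); have := f_decr (N.-1 - d.+1)%N ltac:(lia).
  have -> : ((N.-1 - d.+1).+1 = N.-1 - d)%N by lia.
  lia.
have := upper k kN; have := lower (N.-1 - k)%N ltac:(lia); have := f_lt 0%N ltac:(lia).
have -> : (N.-1 - (N.-1 - k) = k)%N by lia.
lia.
Qed.

Lemma tpermE (T : finType) (a b x : T) :
  tperm a b x = if x == a then b else if x == b then a else x.
Proof.
by case: tpermP => [->|->|/eqP/negbTE-> /eqP/negbTE->]; rewrite ?eqxx //; case: eqP => [->|].
Qed.

Section BruhatOrder.
Variable n : nat.
Implicit Types (g u v b : 'S_n).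

Lemma bruhat_le_refl g : bruhat_le g g.
Proof. exact: connect0. Qed.

Lemma bruhat_le_trans u v b : bruhat_le u v -> bruhat_le v b -> bruhat_le u b.
Proof. exact: connect_trans. Qed.

Lemma bruhat_le_tperm g (p q : 'I_n) :
  (p < q)%N -> (g p < g q)%N -> bruhat_le g (tperm p q * g)%g.
Proof.
move=> pq gpq; apply: connect1; apply/existsP; exists p; apply/existsP; exists q.
by rewrite pq gpq eqxx.
Qed.

Lemma bruhat_le_ind (P : 'S_n -> Prop) :
    (forall g (p q : 'I_n), (p < q)%N -> (g p < g q)%N -> P g -> P (tperm p q * g)%g) ->
  forall u v, bruhat_le u v -> P u -> P v.
Proof.
move=> IH u v /connectP[s path ->]; elim: s u path => //= v' s IHs u.
case/andP=> /existsP[p /existsP[q /and3P[pq gpq /eqP ->]]] path Pu.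
exact: IHs path (IH _ _ _ pq gpq Pu).
Qed.

Lemma w0E (j : 'I_n) : w0 n j = (n - j.+1)%N :> nat.
Proof. by rewrite permE. Qed.

Lemma w0_bruhat_le g : bruhat_le (w0 n) g -> g = w0 n.
Proof.
move=> le_w0g; apply: (bruhat_le_ind (P := eq^~ (w0 n))) le_w0g _ => // {}g p q pq gpq gw0.
by exfalso; move: gpq; rewrite gw0 !w0E; have := ltn_ord q; lia.
Qed.

Definition ncoinv g : nat :=
  #|[set pq : 'I_n * 'I_n | (pq.1 < pq.2)%N && (g pq.1 < g pq.2)%N]|.

Lemma ncoinv_le g : (ncoinv g <= n ^ 2)%N.
Proof. by apply: leq_trans (max_card _) _; rewrite card_prod card_ord. Qed.

Section AdjacentTransposition.
Variables (i : 'I_n) (hi : (i.+1 < n)%N).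
Local Notation s := (sti i).
Local Notation i' := (osucc i).

Lemma osuccE : i' = i.+1 :> nat.
Proof. by rewrite val_insubd hi. Qed.

Lemma osucc_neq : i' != i.
Proof. by rewrite -val_eqE /= osuccE gtn_eqF. Qed.

Lemma perm_adj_neq g : g i != g i'.
Proof. by rewrite (inj_eq perm_inj) eq_sym osucc_neq. Qed.

Lemma perm_adj_ltNlt g : (g i < g i')%N = ~~ (g i' < g i)%N.
Proof. by have := perm_adj_neq g; rewrite -val_eqE /=; lia. Qed.

Lemma stiK g : (s * (s * g))%g = g.
Proof. by rewrite mulgA tperm2 mul1g. Qed.

Lemma sti_mono (p q : 'I_n) : (p < q)%N -> (p, q) != (i, i') -> (s p < s q)%N.
Proof.
move=> pq; rewrite xpair_eqE /sti !tpermE -!val_eqE /=.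
by repeat case: ifP => /eqP; rewrite /= ?osuccE; lia.
Qed.

Lemma bruhat_le_sti g : (g i < g i')%N -> bruhat_le g (s * g)%g.
Proof. by move=> asc; apply: bruhat_le_tperm; rewrite // osuccE. Qed.

Lemma tperm_eq_sti (p q : 'I_n) : (p < q)%N -> tperm p q = s -> (p, q) = (i, i').
Proof.
move=> pq /(congr1 (fun t : 'S_n => t p)); rewrite tpermL /sti tpermE.
have [-> -> //|_] := eqVneq p i.
have [pi'|_ qp] := eqVneq p i'; last by move: pq; rewrite qp ltnn.
by move=> qi; move: pq; rewrite pi' qi osuccE; lia.
Qed.

Lemma bruhat_le_sti_conj g (p q : 'I_n) : (p < q)%N -> (g p < g q)%N -> tperm p q != s ->
  bruhat_le (s * g)%g (s * (tperm p q * g))%g.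
Proof.
move=> pq gpq tpq_neq.
have -> : (s * (tperm p q * g) = tperm p q ^ s * (s * g))%g.
  by rewrite /conjg tpermV !mulgA -[(_ * s * s)%g]mulgA tperm2 mulg1.
rewrite tpermJ; apply: bruhat_le_tperm; rewrite ?permM ?tpermK //.
by apply: sti_mono => //; apply: contraNneq tpq_neq => -[-> ->].
Qed.

Lemma bruhat_le_lift g b : (g i < g i')%N -> bruhat_le (s * g)%g b -> bruhat_le g (s * b)%g.
Proof.
move=> asc le_sgb.
suff /andP[] : bruhat_le g b && bruhat_le g (s * b)%g by [].
pose P x := bruhat_le g x && bruhat_le g (s * x)%g.
apply: (bruhat_le_ind (P := P)) le_sgb _; last by rewrite /P stiK bruhat_le_sti // bruhat_le_refl.
rewrite /P => x p q pq xpq /andP[gx gsx]; apply/andP; split.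
  exact: bruhat_le_trans gx (bruhat_le_tperm pq xpq).
have [->|tpq_neq] := eqVneq (tperm p q) s; first by rewrite stiK.
exact: bruhat_le_trans gsx (bruhat_le_sti_conj pq xpq tpq_neq).
Qed.

Definition sti_max b := if (b i' < b i)%N then b else (s * b)%g.

Lemma bruhat_le_lift_max g b :
  (g i < g i')%N -> bruhat_le g b -> bruhat_le (s * g)%g (sti_max b).
Proof.
move=> asc le_gb; pose P x := bruhat_le (s * g)%g (sti_max x).
apply: (bruhat_le_ind (P := P)) le_gb _; last by rewrite /P /sti_max ltnNge ltnW ?bruhat_le_refl.
rewrite /P => x p q pq xpq sg_le; apply: bruhat_le_trans sg_le _.
have [E | tpq_neq] := eqVneq (tperm p q) s.
  move: xpq; case: (tperm_eq_sti pq E) => -> -> xpq.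
  by rewrite /sti_max !permM tpermL tpermR xpq ltnNge (ltnW xpq) bruhat_le_refl.
have desc_le (y : 'S_n) : (y i' < y i)%N -> bruhat_le (s * y)%g y.
  move=> desc; rewrite -{2}(stiK y); apply: bruhat_le_sti.
  by rewrite !permM tpermL tpermR.
rewrite /sti_max; case: ifP => x_desc; case: ifP => y_desc.
- exact: bruhat_le_tperm.
- apply: bruhat_le_trans (bruhat_le_tperm pq xpq) (bruhat_le_sti _).
  by rewrite perm_adj_ltNlt y_desc.
- exact: bruhat_le_trans (bruhat_le_sti_conj pq xpq tpq_neq) (desc_le _ y_desc).
- exact: bruhat_le_sti_conj.
Qed.

Lemma bruhat_le_sti_desc g b : (g i < g i')%N -> (b i' < b i)%N ->
  bruhat_le (s * g)%g b = bruhat_le g b.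
Proof.
move=> asc desc; apply/idP/idP => [|le_gb].
  exact: bruhat_le_trans (bruhat_le_sti asc).
by have := bruhat_le_lift_max asc le_gb; rewrite /sti_max desc.
Qed.

Lemma bruhat_le_sti_asc g b : (g i < g i')%N -> ~~ (b i' < b i)%N ->
  bruhat_le (s * g)%g (s * b)%g = bruhat_le g b.
Proof.
move=> asc b_asc; apply/idP/idP => [|le_gb].
  by move=> /(bruhat_le_lift asc); rewrite stiK.
by have := bruhat_le_lift_max asc le_gb; rewrite /sti_max (negbTE b_asc).
Qed.

Lemma ncoinv_sti g : (g i < g i')%N -> (ncoinv (s * g)%g < ncoinv g)%N.
Proof.
move=> asc; pose f (pq : 'I_n * 'I_n) := (s pq.1, s pq.2).
have f_inj : injective f by move=> [a b] [c d] /= [/perm_inj -> /perm_inj ->].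
rewrite /ncoinv -(card_imset _ f_inj); apply: proper_card; apply/properP; split.
  apply/subsetP => z /imsetP[[p q] /=]; rewrite inE /= !permM => /andP[pq gpq] ->.
  rewrite inE /= gpq andbT; apply: sti_mono => //.
  by apply: contraTneq gpq => -[-> ->]; rewrite tpermL tpermR -perm_adj_ltNlt.
exists (i, i'); first by rewrite inE /= asc osuccE ltnSn.
apply/imsetP => -[[p q]]; rewrite inE /= => /andP[pq _] [ip iq].
have p_i' : p = i' by rewrite -[p](tpermK i i') -ip tpermL.
have q_i : q = i by rewrite -[q](tpermK i i') -iq tpermR.
by move: pq; rewrite p_i' q_i osuccE; lia.
Qed.

End AdjacentTransposition.

Lemma no_adj_ascent_w0 g :
  (forall i : 'I_n, (i.+1 < n)%N -> ~~ (g i < g (osucc i))%N) -> g = w0 n.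
Proof.
move=> no_asc; apply/permP => j; apply: val_inj; rewrite /= w0E.
have := @decreasing_bounded_eq (fun k => g (insubd j k)) n _ _ j (ltn_ord j).
rewrite valKd; apply.
  move=> k kn; have -> : insubd j k.+1 = osucc (insubd j k).
    by apply: val_inj; rewrite /osucc !val_insubd kn !ifT //; lia.
  have ik : ((insubd j k : 'I_n).+1 < n)%N by rewrite val_insubd ifT //; lia.
  by have := no_asc _ ik; rewrite perm_adj_ltNlt // negbK.
by move=> k _; apply: ltn_ord.
Qed.

Lemma ncoinv_eq0 g : ncoinv g = 0%N -> g = w0 n.
Proof.
move/eqP; rewrite cards_eq0 => /eqP no_coinv; apply: no_adj_ascent_w0 => i hi.
apply/negP => asc.
have : (i, osucc i) \in [set pq : 'I_n * 'I_n | (pq.1 < pq.2)%N && (g pq.1 < g pq.2)%N].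
  by rewrite inE /= asc (osuccE hi) ltnSn.
by rewrite no_coinv inE.
Qed.

Lemma bruhat_le_w0 g : bruhat_le g (w0 n).
Proof.
move: {2}(ncoinv g) (leqnn (ncoinv g)) => k; elim: k g => [|k IH] g g_k.
  by rewrite (@ncoinv_eq0 g) ?bruhat_le_refl //; lia.
case: (pickP (fun i : 'I_n => (i.+1 < n)%N && (g i < g (osucc i))%N)) => [i /andP[hi asc] | no_asc].
  apply: bruhat_le_trans (bruhat_le_sti hi asc) (IH _ _).
  by have := ncoinv_sti hi asc; lia.
rewrite (@no_adj_ascent_w0 g) ?bruhat_le_refl // => i hi.
by move: (no_asc i); rewrite hi /= => ->.
Qed.

End BruhatOrder.

Lemma sumr_nat_eq (V : pzSemiRingType) (lo hi c : nat) :
  \sum_(lo <= k < hi) (k == c)%:R = (lo <= c < hi)%:R :> V.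
Proof.
rewrite -natr_sum (eq_bigr (fun k => if k == c then 1 else 0)%N); last by move=> k; case: eqP.
by rewrite -big_mkcond sum1_count -mem_index_iota -count_uniq_mem ?iota_uniq.
Qed.

Lemma segment_sq_le a b c : (minn a b <= c <= maxn a b)%N ->
  (c ^ 2 + (a + b - c) ^ 2 <= a ^ 2 + b ^ 2)%N.
Proof. by nia. Qed.

Lemma segment_sq_eq a b c : (minn a b <= c <= maxn a b)%N ->
  (a ^ 2 + b ^ 2 <= c ^ 2 + (a + b - c) ^ 2)%N -> c = a \/ c = b.
Proof. by nia. Qed.

Lemma mcoeff_sum_msupp (R : nzRingType) (n : nat) (f : {mpoly R[n]}) x :
  \sum_(m <- msupp f) f@_m * (m == x)%:R = f@_x.
Proof. by rewrite {3}[f]mpolyE raddf_sum; apply: eq_bigr => m _; rewrite -mcoeffX -mcoeffZ. Qed.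

Section DemazureMonomial.
Variables (R : realFieldType) (n : nat) (i : 'I_n).
Hypothesis hi : (i.+1 < n)%N.
Local Notation s := (sti i).
Local Notation i' := (osucc i).
Implicit Types (m mu : 'X_{1..n}) (f : {mpoly R[n]}).

Definition mupd m c e : 'X_{1..n} :=
  [multinom if j == i then c else if j == i' then e else m j | j < n].

Lemma mupdE m c e j : mupd m c e j = if j == i then c else if j == i' then e else m j.
Proof. exact: mnmE. Qed.

Lemma mupd_i m c e : mupd m c e i = c.
Proof. by rewrite mupdE eqxx. Qed.

Lemma mupd_i' m c e : mupd m c e i' = e.
Proof. by rewrite mupdE (negbTE (osucc_neq hi)) eqxx. Qed.

Lemma mupd_id m : mupd m (m i) (m i') = m.
Proof. by apply/mnmP => j; rewrite mupdE; case: eqP => [->|_] //; case: eqP => [->|]. Qed.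

Lemma mupd_mupd m c e c' e' : mupd (mupd m c e) c' e' = mupd m c' e'.
Proof. by apply/mnmP => j; rewrite !mupdE; case: (j == i); case: (j == i'). Qed.

Lemma mupd_eq m c e c' e' : (mupd m c e == mupd m c' e') = (c == c') && (e == e').
Proof.
apply/eqP/andP => [E|[/eqP-> /eqP->] //].
by split; apply/eqP; [have := congr1 (fun z : 'X_{1..n} => z i) E
  | have := congr1 (fun z : 'X_{1..n} => z i') E]; rewrite /= ?mupd_i ?mupd_i'.
Qed.

Lemma mulX_mupd m c e : 'X_i * 'X_[mupd m c e] = 'X_[mupd m c.+1 e] :> {mpoly R[n]}.
Proof.
rewrite -mpolyXD; congr 'X_[_]; apply/mnmP => j; rewrite mnmDE mnm1E !mupdE.
by case: (eqVneq j i).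
Qed.

Lemma mulX'_mupd m c e : 'X_i' * 'X_[mupd m c e] = 'X_[mupd m c e.+1] :> {mpoly R[n]}.
Proof.
rewrite -mpolyXD; congr 'X_[_]; apply/mnmP => j; rewrite mnmDE mnm1E !mupdE.
have [->|_] := eqVneq j i; first by rewrite (negbTE (osucc_neq hi)).
by case: (eqVneq j i').
Qed.

Lemma msym_mupd m c e : msym s 'X_[mupd m c e] = 'X_[mupd m e c] :> {mpoly R[n]}.
Proof.
rewrite msymX tpermV; congr 'X_[_]; apply/mnmP => j; rewrite mnmE !mupdE tpermE.
have [_|/negbTE ji] := eqVneq j i; first by rewrite (negbTE (osucc_neq hi)) eqxx.
by case: (eqVneq j i') => [_|/negbTE ->]; rewrite ?eqxx ?ji.
Qed.

Definition demazureX m : {mpoly R[n]} :=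
  if (m i' <= m i)%N then \sum_(m i' <= c < (m i).+1) 'X_[mupd m c (m i + m i' - c)]
  else - \sum_((m i).+1 <= c < m i') 'X_[mupd m c (m i + m i' - c)].

Lemma demazureX_spec m :
  ('X_i - 'X_i') * demazureX m = 'X_i * 'X_[m] - msym s ('X_i * 'X_[m]).
Proof.
rewrite /demazureX; set a := m i; set b := m i'.
pose F c : {mpoly R[n]} := 'X_[mupd m c ((a + b).+1 - c)].
have telescope lo up : (lo <= up)%N -> (up <= (a + b).+1)%N ->
    \sum_(lo <= c < up) ('X_i - 'X_i') * 'X_[mupd m c (a + b - c)] = F up - F lo.
  move=> lo_up up_ab; rewrite -telescope_sumr //; apply: eq_big_nat => c /andP[_ c_hi].
  by rewrite mulrBl mulX_mupd mulX'_mupd /F subSS subSn //; lia.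
have -> : 'X_i * 'X_[m] = F a.+1 by rewrite -{1}(mupd_id m) mulX_mupd /F subSS addKn.
have -> : msym s (F a.+1) = F b by rewrite msym_mupd /F subSS addKn -addSn addnK.
case: leqP => ba; rewrite ?mulrN mulr_sumr telescope ?opprB //; lia.
Qed.

Lemma subX_neq0 : ('X_i - 'X_i' : {mpoly R[n]}) != 0.
Proof.
apply: contra_neq (osucc_neq hi) => /(congr1 (mcoeff U_(i))).
rewrite mcoeffB !mcoeffXU eqxx mcoeff0; case: eqP => // _ /eqP.
by rewrite subr0 oner_eq0.
Qed.

Lemma ddiff_unique (h g : {mpoly R[n]}) :
  ('X_i - 'X_i') * g = h - msym s h -> ddiff i h = g.
Proof.
move=> g_spec; apply: (mulfI subX_neq0); rewrite g_spec.
pose quotient g' := ('X_i - 'X_i') * g' = h - msym s h.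
exact: (epsilon_spec (inhabits 0) quotient (ex_intro _ g g_spec)).
Qed.

Lemma demazureE f : demazure i f = \sum_(m <- msupp f) f@_m *: demazureX m.
Proof.
apply: ddiff_unique; rewrite [in RHS](mpolyE f) !mulr_sumr (raddf_sum (msym s)) -sumrB.
apply: eq_bigr => m _; rewrite -scalerAr demazureX_spec scalerBr -scalerAr.
by congr (_ - _); apply/esym/msymZ.
Qed.

Lemma mcoeff_demazure f mu :
  (demazure i f)@_mu = \sum_(m <- msupp f) f@_m * (demazureX m)@_mu.
Proof. by rewrite demazureE raddf_sum; apply: eq_bigr => m _; apply: mcoeffZ. Qed.

Lemma mcoeff_demazureX m c :
  (demazureX m)@_(mupd m c (m i + m i' - c)) =
  if (m i' <= m i)%N then (m i' <= c <= m i)%:R else - (m i < c < m i')%:R.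
Proof.
have term k :
    ('X_[mupd m k (m i + m i' - k)] : {mpoly R[n]})@_(mupd m c (m i + m i' - c)) = (k == c)%:R.
  by rewrite mcoeffX mupd_eq andb_idr // => /eqP->.
rewrite /demazureX; case: (leqP (m i') (m i)) => _; rewrite ?mcoeffN raddf_sum.
all: by rewrite (eq_bigr _ (fun k _ => term k)) sumr_nat_eq ?ltnS.
Qed.

Lemma msupp_demazureX m mu : mu \in msupp (demazureX m) ->
  exists2 c, (minn (m i) (m i') <= c <= maxn (m i) (m i'))%N & mu = mupd m c (m i + m i' - c).
Proof.
rewrite /demazureX; case: (leqP (m i') (m i)) => _; rewrite ?(perm_mem (msuppN _)).
all: move=> /msupp_sum_le /flattenP[ms /mapP[c]].
all: rewrite mem_filter mem_index_iota /= => c_range ->.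
all: by rewrite msuppX inE => /eqP ->; exists c => //; lia.
Qed.

Definition sqnorm m : nat := (\sum_(j < n) m j ^ 2)%N.

Lemma sqnorm_mupd m c e :
  (sqnorm (mupd m c e) + (m i ^ 2 + m i' ^ 2) = sqnorm m + (c ^ 2 + e ^ 2))%N.
Proof.
have split_sq m' :
    sqnorm m' = (m' i ^ 2 + m' i' ^ 2 + \sum_(j | (j != i) && (j != i')) m' j ^ 2)%N.
  by rewrite /sqnorm (bigD1 i) //= (bigD1 i') /= ?addnA //; apply: osucc_neq.
have same_rest : (\sum_(j | (j != i) && (j != i')) mupd m c e j ^ 2 =
    \sum_(j | (j != i) && (j != i')) m j ^ 2)%N.
  by apply: eq_bigr => j /andP[/negbTE ji /negbTE ji']; rewrite mupdE ji ji'.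
by rewrite !split_sq mupd_i mupd_i' same_rest; lia.
Qed.

Lemma mcoeff_demazureX_id m : (demazureX m)@_m = (m i' <= m i)%:R.
Proof.
have := mcoeff_demazureX m (m i); rewrite addKn mupd_id => ->.
by rewrite leqnn ltnn andbT; case: leqP; rewrite ?oppr0.
Qed.

Lemma mcoeff_demazureX_swap m : (demazureX m)@_(mupd m (m i') (m i)) = (m i' <= m i)%:R.
Proof.
have := mcoeff_demazureX m (m i'); rewrite addnK => ->.
by rewrite leqnn ltnn andbF; case: leqP; rewrite ?oppr0.
Qed.

Lemma sqnorm_demazureX_le m mu : mu \in msupp (demazureX m) -> (sqnorm mu <= sqnorm m)%N.
Proof.
move=> /msupp_demazureX[c c_between ->]; have := segment_sq_le c_between.
by have := sqnorm_mupd m c (m i + m i' - c); lia.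
Qed.

Lemma sqnorm_demazureX_max m mu :
  mu \in msupp (demazureX m) -> (sqnorm m <= sqnorm mu)%N -> mu = m \/ mu = mupd m (m i') (m i).
Proof.
move=> /msupp_demazureX[c c_between ->] m_le.
have /(segment_sq_eq c_between)[->|->] : (m i ^ 2 + m i' ^ 2 <= c ^ 2 + (m i + m i' - c) ^ 2)%N.
  by have := sqnorm_mupd m c (m i + m i' - c); lia.
- by left; rewrite addKn mupd_id.
- by right; rewrite addnK.
Qed.

Lemma msupp_demazure f mu : mu \in msupp (demazure i f) ->
  exists2 m, m \in msupp f & mu \in msupp (demazureX m).
Proof.
rewrite demazureE => /msupp_sum_le /flattenP[ms /mapP[m]].
by rewrite mem_filter => m_f -> /msuppZ_le mu_m; exists m.
Qed.

End DemazureMonomial.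

Section KeyInvariant.
Variables (R : realFieldType) (n : nat).
Implicit Types (g b : 'S_n) (m mu : 'X_{1..n}) (f : {mpoly R[n]}).
Local Notation sqnorm_max := (\sum_(j < n) j.+1 ^ 2)%N.

Definition perm_mnm g : 'X_{1..n} := [multinom (g j).+1 | j < n].

Lemma perm_mnmE g j : perm_mnm g j = (g j).+1.
Proof. exact: mnmE. Qed.

Lemma perm_mnm_inj : injective perm_mnm.
Proof.
by move=> g h /mnmP gh; apply/permP => j; apply/val_inj/succn_inj; rewrite -!perm_mnmE.
Qed.

Lemma mvec_perm_mnm g : mvec R (perm_mnm g) = pvec R g.
Proof. by apply/rowP => j; rewrite !mxE perm_mnmE. Qed.

Lemma sqnorm_perm_mnm g : sqnorm (perm_mnm g) = sqnorm_max.
Proof.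
rewrite /sqnorm (reindex_inj (@perm_inj _ g^-1)).
by apply: eq_bigr => j _; rewrite perm_mnmE permKV.
Qed.

Definition upper_pvecs g : seq 'rV[R]_n := [seq pvec R b | b <- enum 'S_n & bruhat_le g b].

Lemma mem_upper_pvecs g b : bruhat_le g b -> pvec R b \in upper_pvecs g.
Proof. by move=> gb; apply: map_f; rewrite mem_filter gb mem_enum. Qed.

Lemma upper_pvecsP g p : p \in upper_pvecs g -> exists2 b, bruhat_le g b & p = pvec R b.
Proof. by case/mapP => b; rewrite mem_filter => /andP[gb _] ->; exists b. Qed.

Definition key_inv g f : Prop :=
  [/\ {in msupp f, forall mu, conv (upper_pvecs g) (mvec R mu)},
      forall b, f@_(perm_mnm b) = (bruhat_le g b)%:R
    & {in msupp f, forall mu, sqnorm mu <= sqnorm_max}%N].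

Lemma key_inv_w0 : key_inv (w0 n) 'X_[perm_mnm (w0 n)].
Proof.
split=> [mu | b | mu].
- rewrite msuppX inE => /eqP->; rewrite mvec_perm_mnm.
  exact/conv_mem/mem_upper_pvecs/bruhat_le_refl.
- rewrite mcoeffX (inj_eq perm_mnm_inj).
  have [<-|w0b] := eqVneq; first by rewrite bruhat_le_refl.
  by case: (boolP (bruhat_le _ _)) => // /w0_bruhat_le bw0; rewrite bw0 eqxx in w0b.
- by rewrite msuppX inE => /eqP->; rewrite sqnorm_perm_mnm.
Qed.

Section DemazureStep.
Variables (i : 'I_n) (hi : (i.+1 < n)%N).
Local Notation s := (sti i).
Local Notation i' := (osucc i).

Lemma perm_mnm_sti b :
  perm_mnm (s * b)%g = mupd i (perm_mnm b) (perm_mnm b i') (perm_mnm b i).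
Proof.
by apply/mnmP => j; rewrite mupdE !perm_mnmE permM tpermE; case: (j == i); case: (j == i').
Qed.

Lemma col_perm_mvec m : col_perm s (mvec R m) = mvec R (mupd i m (m i') (m i)).
Proof. by apply/rowP => j; rewrite !mxE mupdE tpermE; case: (j == i); case: (j == i'). Qed.

Lemma col_perm_pvec b : col_perm s (pvec R b) = pvec R (s * b)%g.
Proof. by apply/rowP => j; rewrite !mxE permM. Qed.

Lemma conv_mvec_mupd T m c : (minn (m i) (m i') <= c <= maxn (m i) (m i'))%N ->
    conv T (mvec R m) -> conv T (mvec R (mupd i m (m i') (m i))) ->
  conv T (mvec R (mupd i m c (m i + m i' - c))).
Proof.
move=> c_between Tm Tm'.
have comb (u v : nat) p q : conv T (mvec R p) -> conv T (mvec R q) -> (0 < u + v)%N ->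
    (forall j, (u + v) * mupd i m c (m i + m i' - c) j = u * p j + v * q j)%N ->
  conv T (mvec R (mupd i m c (m i + m i' - c))).
  move=> Tp Tq uv_gt0 uvE; apply: (conv_segment (u := u%:R) (v := v%:R) Tp Tq).
  - exact: ler0n.
  - exact: ler0n.
  - by rewrite -natrD ltr0n.
  - by apply/rowP => j; rewrite !mxE -natrD -!natrM -natrD uvE.
have [ab|ab] := eqVneq (m i) (m i').
  have -> : c = m i by lia.
  by rewrite addKn mupd_id.
case: (leqP (m i') (m i)) => ba.
- apply: (comb (c - m i')%N (m i - c)%N m _ Tm Tm'); first by lia.
  by move=> j; rewrite !mupdE; case: eqP => [->|_]; [|case: eqP => [->|_]]; nia.
- apply: (comb (m i' - c)%N (c - m i)%N m _ Tm Tm'); first by lia.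
  by move=> j; rewrite !mupdE; case: eqP => [->|_]; [|case: eqP => [->|_]]; nia.
Qed.

Lemma perm_mnm_sti_neq b : perm_mnm (s * b)%g != perm_mnm b.
Proof.
rewrite (inj_eq perm_mnm_inj); apply/eqP => /permP/(_ i)/eqP.
by rewrite permM tpermL eq_sym (negbTE (perm_adj_neq hi b)).
Qed.

Lemma mcoeff_demazureX_perm_mnm m b : (sqnorm m <= sqnorm_max)%N ->
  (demazureX R i m)@_(perm_mnm b) =
  (m == if (b i' < b i)%N then perm_mnm b else perm_mnm (s * b)%g)%:R.
Proof.
move=> m_le; have b_neq := perm_adj_neq hi b; rewrite -val_eqE /= in b_neq.
have [->|ne_b] := eqVneq m (perm_mnm b).
  rewrite mcoeff_demazureX_id // !perm_mnmE ltnS leq_eqVlt eq_sym (negbTE b_neq).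
  by case: ifP; rewrite ?eqxx // eq_sym (negbTE (perm_mnm_sti_neq b)).
have [->|ne_sb] := eqVneq m (perm_mnm (s * b)%g).
  set sb := perm_mnm (s * b)%g.
  have pbE : perm_mnm b = mupd i sb (sb i') (sb i).
    by rewrite /sb perm_mnm_sti mupd_i mupd_i' // mupd_mupd mupd_id.
  rewrite {1}pbE mcoeff_demazureX_swap // !perm_mnmE !permM tpermL tpermR ltnS.
  by case: leqP; rewrite ?eqxx // (negbTE (perm_mnm_sti_neq b)).
have -> : (m == if (b i' < b i)%N then perm_mnm b else perm_mnm (s * b)%g) = false.
  by case: ifP => _; apply/negbTE.
apply/eqP; apply: contraTT isT.
rewrite -mcoeff_msupp => /sqnorm_demazureX_max; rewrite sqnorm_perm_mnm => /(_ hi m_le)[E|E].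
  by rewrite E eqxx in ne_b.
by rewrite perm_mnm_sti E mupd_i mupd_i' // mupd_mupd mupd_id eqxx in ne_sb.
Qed.

Lemma key_inv_demazure g f :
  (g i < g i')%N -> key_inv (s * g)%g f -> key_inv g (demazure i f).
Proof.
move=> asc [f_conv f_coef f_sqnorm]; split.
- move=> _ /(msupp_demazure hi)[m m_f /(msupp_demazureX hi)[c c_between ->]].
  apply: conv_mvec_mupd c_between _ _.
    apply: conv_sub (f_conv _ m_f) => _ /upper_pvecsP[b sg_b ->]; apply: mem_upper_pvecs.
    exact: bruhat_le_trans (bruhat_le_sti hi asc) sg_b.
  rewrite -col_perm_mvec; apply: (conv_linear (f := col_perm s)) (f_conv _ m_f) _.
  move=> _ /upper_pvecsP[b sg_b ->] /=; rewrite col_perm_pvec; apply/conv_mem/mem_upper_pvecs.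
  exact: (bruhat_le_lift hi asc sg_b).
- move=> b; rewrite (mcoeff_demazure hi).
  under eq_big_seq => m m_f do rewrite mcoeff_demazureX_perm_mnm ?f_sqnorm //.
  rewrite mcoeff_sum_msupp; case: ifP => b_desc; rewrite f_coef.
    by rewrite (bruhat_le_sti_desc hi asc b_desc).
  by rewrite (bruhat_le_sti_asc hi asc) ?b_desc.
- move=> mu /(msupp_demazure hi)[m m_f /(sqnorm_demazureX_le hi) mu_le].
  exact: leq_trans mu_le (f_sqnorm _ m_f).
Qed.

End DemazureStep.

Lemma key_inv_key_fuel k g : (ncoinv g <= k)%N -> key_inv g (key_fuel R k (perm_comp g)).
Proof.
elim: k g => [|k IH] g g_k /=.
  by rewrite (@ncoinv_eq0 _ g); [exact: key_inv_w0 | lia].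
case: pickP => [i /andP[hi asc] | no_asc].
  have -> : (fun p => perm_comp g (sti i p)) = perm_comp (sti i * g)%g.
    by apply: functional_extensionality => p; rewrite /perm_comp permM.
  rewrite /perm_comp ltnS in asc; apply: (key_inv_demazure hi asc); apply: IH.
  by have := ncoinv_sti hi asc; lia.
rewrite (@no_adj_ascent_w0 _ g); first exact: key_inv_w0.
by move=> i hi; move: (no_asc i); rewrite hi /perm_comp ltnS /= => ->.
Qed.

End KeyInvariant.

Theorem corollary1p3 (R : realFieldType) (n : nat) (w : 'S_n) :
  forall x : 'rV[R]_n,
    Newton (@key R n (perm_comp w)) x <-> @bip R n w (w0 n) x.
Proof.
move=> x; have [supp_conv coef _] := key_inv_key_fuel R (ncoinv_le w).
have -> : bip w (w0 n) = conv (upper_pvecs R w).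
  rewrite /bip /upper_pvecs; congr (conv (map _ _)).
  by apply: eq_filter => b; rewrite bruhat_le_w0 andbT.
split=> [Nx | Qx].
  by apply: conv_trans Nx _ => _ /mapP[mu mu_supp ->]; apply: supp_conv.
apply: conv_trans Qx _ => _ /upper_pvecsP[b wb ->]; apply: conv_mem.
by rewrite -mvec_perm_mnm map_f // mcoeff_msupp coef wb oner_neq0.
Qed.
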